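(* Let $0\ne x\in J$ and let $\mathcal I=\{I_i\}_{i\in F}$ and $\mathcal L=\{L_j\}_{j\in G}$ be $x$-norming partitions. Suppose there exist $i\in F$ and $j\in G$ with $I_i\subset L_j$ and $\min I_i=\min L_j$. Then for every $i'\in F$, $i'\ne i$, either $I_{i'}\subset L_j$ or $I_{i'}\cap L_j=\emptyset$. Consequently there exists a subinterval $F_j$ of $F$ such that $L_j\cap\mathrm{supp}(x)=\bigcup_{i\in F_j}(I_i\cap\mathrm{supp}(x))$.
   Context: For a real sequence $x=(x(n))_{n\in\mathbb N}$ let $\|x\|_J=\sup\bigl(\sum_{i=1}^n|\sum_{k\in I_i}x(k)|^2\bigr)^{1/2}$ over all $n$ and all families of pairwise disjoint intervals $I_1,\dots,I_n$ of $\mathbb N$ (intervals: nonempty sets of consecutive positive integers, possibly infinite). $J=\{x:\|x\|_J<\infty\}$; for $x\in J$ and any interval $I$ the series $\sum_{k\in I}x(k)$ converges. $\mathrm{supp}(x)=\{n:x(n)\ne0\}$. A family of intervals $\mathcal I=\{I_i\}_{i\in F}$: $F=\{1,\dots,k\}$ or $F=\mathbb N$, each $I_i$ an interval, $\max I_i<\min I_{i+1}$ whenever $i+1\in F$; $\|x\|_{\mathcal I}=(\sum_{i\in F}|\sum_{k\in I_i}x(k)|^2)^{1/2}$; it is $x$-norming if $\|x\|_{\mathcal I}=\|x\|_J$. For nonempty $L\subset\mathbb N$, $\sup L=\max L$ if finite and $\infty$ otherwise. An $x$-norming partition is an $x$-norming family with $\{\min I_i,\max I_i\}\subset\mathrm{supp}(x)$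 for all $i<\sup F$, and, if $F$ is finite, $\min I_i\in\mathrm{supp}(x)$ and $\sup I_i=\sup\mathrm{supp}(x)$ for $i=\sup F$. *)

From Stdlib Require Import Reals Lra Lia List Classical ClassicalEpsilon.
From Coquelicot Require Import Coquelicot.
Open Scope R_scope.

(* Sequences x = (x(n))_{n in N}, N = positive integers; x 0 is never used. *)

Definition is_interval (I : nat -> Prop) : Prop :=
  (exists n, I n) /\
  (forall n, I n -> (1 <= n)%nat) /\
  (forall a b c, I a -> I c -> (a <= b)%nat -> (b <= c)%nat -> I b).

Definition is_min (I : nat -> Prop) (m : nat) : Prop :=
  I m /\ forall k, I k -> (m <= k)%nat.
Definition is_max (I : nat -> Prop) (m : nat) : Prop :=
  I m /\ forall k, I k -> (k <= m)%nat.

(* sup L = max L if L is finite (bounded), infinity (None) otherwise. *)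
Definition is_sup_set (L : nat -> Prop) (s : option nat) : Prop :=
  match s with
  | Some b => is_max L b
  | None => forall n, exists m, L m /\ (n < m)%nat
  end.

Definition isum (x : nat -> R) (I : nat -> Prop) : R :=
  Series (fun k => if excluded_middle_informative (I k) then x k else 0).

Definition normJ (x : nat -> R) : Rbar :=
  Lub_Rbar (fun r => exists l : list (nat -> Prop),
     (forall I, In I l -> is_interval I) /\
     ForallOrdPairs (fun A B => forall k, ~ (A k /\ B k)) l /\
     r = sqrt (fold_right (fun I acc => (isum x I) ^ 2 + acc) 0 l)).

Definition inJ (x : nat -> R) : Prop := is_finite (normJ x).

Definition supp (x : nat -> R) : nat -> Prop := fun n => (1 <= n)%nat /\ x n <> 0.

(* Index sets F = {1,...,k} (Some k, k >= 1) or F = N (None). *)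
Definition inF (F : option nat) (i : nat) : bool :=
  (1 <=? i)%nat && match F with Some k => (i <=? k)%nat | None => true end.

Definition lt_supF (F : option nat) (i : nat) : Prop :=
  match F with Some k => (i < k)%nat | None => True end.

Definition is_family (I : nat -> nat -> Prop) (F : option nat) : Prop :=
  (match F with Some k => (1 <= k)%nat | None => True end) /\
  (forall i, inF F i = true -> is_interval (I i)) /\
  (forall i, inF F i = true -> inF F (S i) = true ->
     forall a b, I i a -> I (S i) b -> (a < b)%nat).

Definition fam_norm (x : nat -> R) (I : nat -> nat -> Prop) (F : option nat) : Rbar :=
  Lim_seq (fun n => sqrt (sum_f_R0
     (fun i => if inF F i then (Rabs (isum x (I i))) ^ 2 else 0) n)).

Definition x_norming (x : nat -> R) (I : nat -> nat -> Prop) (F : option nat) : Prop :=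
  is_family I F /\ fam_norm x I F = normJ x.

Definition x_norming_partition (x : nat -> R) (I : nat -> nat -> Prop) (F : option nat) : Prop :=
  x_norming x I F /\
  (forall i, inF F i = true -> lt_supF F i ->
     (exists m, is_min (I i) m /\ supp x m) /\
     (exists m, is_max (I i) m /\ supp x m)) /\
  (match F with
   | Some k => (exists m, is_min (I k) m /\ supp x m) /\
               (exists s, is_sup_set (I k) s /\ is_sup_set (supp x) s)
   | None => True
   end).

(* Let a = min I_i = min L_j.  If a member I_{i'} met L_j without lying inside it, then
   i < i', L_j would contain c = min I_{i'}, and I_{i'} would contain a support point r
   beyond L_j.  Norming families are locally optimal: replacing finitely many members by
   intervals disjoint from the other members cannot increase the sum of squares.  With w, u, v
   the sums of x over W = [a, c), U = L_j ∩ [c, ∞) and V = I_{i'} \ L_j, the splittings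
   L_j = W ⊔ U and I_{i'} = U ⊔ V give w, u, v ≠ 0 (a, c, r are support points) and
   wu, uv ≥ 0, while merging I_i, ..., I_{i'} into W ∪ I_{i'}, and packing I_i, ..., I_{i'-1}
   and U into L_j, gives wv ≤ 0.  So the members meeting L_j lie inside it; they have
   consecutive indices, and they cover L_j ∩ supp x since every support point lies in some
   member of a norming family. *)

From Stdlib Require Import Reals Lra Lia List Permutation Classical ClassicalEpsilon.
From Coquelicot Require Import Coquelicot.
Open Scope R_scope.

Definition ind (x : nat -> R) (P : nat -> Prop) (k : nat) : R :=
  if excluded_middle_informative (P k) then x k else 0.

Lemma is_series_ind_bounded x P M :
  (forall k, P k -> (k <= M)%nat) -> is_series (ind x P) (sum_f_R0 (ind x P) M).
Proof.
  intros HM. apply is_series_Reals. intros eps Heps. exists M. intros n Hn.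
  assert (Htail : sum_f_R0 (ind x P) n = sum_f_R0 (ind x P) M).
  { induction Hn as [|n Hn IH]; [reflexivity|].
    simpl. rewrite IH. unfold ind.
    destruct excluded_middle_informative as [Hp|]; [apply HM in Hp; lia|ring]. }
  unfold R_dist. rewrite Htail, Rminus_diag, Rabs_R0. exact Heps.
Qed.

Lemma isum_bounded x P M :
  (forall k, P k -> (k <= M)%nat) -> isum x P = sum_f_R0 (ind x P) M.
Proof. intros HM. apply is_series_unique, is_series_ind_bounded, HM. Qed.

Lemma isum_empty x P : (forall k, ~ P k) -> isum x P = 0.
Proof.
  intros HP. rewrite (isum_bounded x P 0) by (intros k Hk; contradiction (HP k)).
  simpl. unfold ind.
  destruct excluded_middle_informative; [contradiction (HP 0%nat)|reflexivity].
Qed.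

Lemma isum_singleton x r : isum x (fun k => k = r) = x r.
Proof.
  rewrite (isum_bounded x _ r) by (intros; lia).
  assert (Hind : ind x (fun k => k = r) r = x r).
  { unfold ind. destruct excluded_middle_informative; [reflexivity|congruence]. }
  destruct r as [|r]; [exact Hind|].
  simpl. rewrite Hind, (sum_eq _ (fun _ => 0)), sum_cte; [ring|].
  intros k Hk. unfold ind. destruct excluded_middle_informative; [lia|reflexivity].
Qed.

Lemma sum_n_m_ind x P n m : (n <= m)%nat ->
  sum_n_m (ind x P) (S n) m = isum x (fun k => P k /\ (S n <= k <= m)%nat).
Proof.
  intros Hnm. set (Q := fun k => P k /\ (S n <= k <= m)%nat).
  rewrite (isum_bounded x Q m) by (unfold Q; intros; lia).
  rewrite <- sum_n_Reals, (sum_n_m_ext_loc _ (ind x Q)).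
  - unfold sum_n. rewrite (sum_n_m_Chasles _ 0 n m) by lia.
    rewrite (sum_n_m_ext_loc _ (fun _ => zero) 0 n), sum_n_m_const_zero, plus_zero_l;
      [reflexivity|].
    intros k Hk. unfold ind, Q. destruct excluded_middle_informative; [lia|reflexivity].
  - intros k Hk. unfold ind, Q.
    destruct excluded_middle_informative as [HP|HP];
    destruct excluded_middle_informative as [HQ|HQ]; tauto.
Qed.

Definition disjoint (A B : nat -> Prop) : Prop := forall k, ~ (A k /\ B k).

Lemma isum_union_ex x A B C :
  ex_series (ind x A) -> ex_series (ind x B) -> disjoint A B ->
  (forall k, C k <-> A k \/ B k) -> isum x C = isum x A + isum x B.
Proof.
  intros HA HB HAB HC. unfold isum. rewrite <- Series_plus by assumption.
  apply Series_ext. intros k. specialize (HAB k). specialize (HC k). unfold ind.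
  repeat destruct excluded_middle_informative; try ring; tauto.
Qed.

Definition sumf {A : Type} (f : A -> R) (l : list A) : R :=
  fold_right (fun a acc => f a + acc) 0 l.

Lemma sumf_app {A} (f : A -> R) l1 l2 : sumf f (l1 ++ l2) = sumf f l1 + sumf f l2.
Proof. induction l1 as [|a l1 IH]; simpl; [ring|]. unfold sumf in *; simpl. rewrite IH. ring. Qed.

Lemma sumf_map {A B} (f : B -> R) (g : A -> B) l : sumf f (map g l) = sumf (fun a => f (g a)) l.
Proof.
  induction l as [|a l IH]; [reflexivity|]. unfold sumf in *; simpl. rewrite IH. reflexivity.
Qed.

Lemma sumf_ext {A} (f g : A -> R) l : (forall a, In a l -> f a = g a) -> sumf f l = sumf g l.
Proof.
  induction l as [|a l IH]; intros Hfg; [reflexivity|]. unfold sumf in *; simpl.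
  rewrite Hfg by (left; reflexivity). rewrite IH; [reflexivity|].
  intros b Hb. apply Hfg. right. exact Hb.
Qed.

Lemma sumf_plus {A} (f g : A -> R) l : sumf (fun a => f a + g a) l = sumf f l + sumf g l.
Proof.
  induction l as [|a l IH]; simpl; [unfold sumf; simpl; ring|].
  unfold sumf in *; simpl. rewrite IH. ring.
Qed.

Lemma sumf_filter {A} (f : A -> R) (p : A -> bool) l :
  sumf (fun a => if p a then f a else 0) l = sumf f (filter p l).
Proof.
  induction l as [|a l IH]; [reflexivity|]. unfold sumf in *; simpl.
  rewrite IH. destruct (p a); simpl; ring.
Qed.

Lemma sumf_Permutation {A} (f : A -> R) l1 l2 : Permutation l1 l2 -> sumf f l1 = sumf f l2.
Proof. induction 1; unfold sumf in *; simpl; try congruence; ring. Qed.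

Lemma sum_f_R0_sumf (f : nat -> R) n : sum_f_R0 f n = sumf f (seq 0 (S n)).
Proof.
  induction n as [|n IH]; [unfold sumf; simpl; ring|].
  rewrite seq_S, sumf_app. simpl. rewrite IH. unfold sumf; simpl. ring.
Qed.

Definition memb (m : nat) (s : list nat) : bool := existsb (Nat.eqb m) s.

Lemma memb_In m s : memb m s = true <-> In m s.
Proof.
  unfold memb. rewrite existsb_exists. split.
  - intros [m' [Hm' Heq]]. apply Nat.eqb_eq in Heq. subst. exact Hm'.
  - intros Hm. exists m. split; [exact Hm|apply Nat.eqb_refl].
Qed.

Lemma sum_f_R0_indicator_split (p : nat -> bool) (h : nat -> R) s n :
  NoDup s -> (forall m, In m s -> p m = true) -> (list_max s <= n)%nat ->
  sum_f_R0 (fun m => if p m then h m else 0) n =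
  sumf h (filter (fun m => andb (p m) (negb (memb m s))) (seq 0 (S n))) + sumf h s.
Proof.
  intros Hs Hsp Hn. rewrite sum_f_R0_sumf.
  rewrite (sumf_Permutation _ s (filter (fun m => memb m s) (seq 0 (S n)))).
  2:{ apply NoDup_Permutation; [exact Hs|apply NoDup_filter, seq_NoDup|].
      intros m. rewrite filter_In, in_seq, memb_In. split; [|tauto]. intros Hm.
      apply list_max_le in Hn. rewrite Forall_forall in Hn. specialize (Hn m Hm).
      split; [lia|exact Hm]. }
  rewrite <- !sumf_filter, <- sumf_plus. apply sumf_ext. intros m _.
  destruct (memb m s) eqn:Hm; destruct (p m) eqn:Hpm; simpl; try ring.
  apply memb_In, Hsp in Hm. congruence.
Qed.

Definition sumsq (x : nat -> R) (l : list (nat -> Prop)) : R := sumf (fun P => isum x P ^ 2) l.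

Lemma sumsq_app x l1 l2 : sumsq x (l1 ++ l2) = sumsq x l1 + sumsq x l2.
Proof. apply sumf_app. Qed.

Lemma sumsq_nonneg x l : 0 <= sumsq x l.
Proof.
  induction l as [|P l IH]; unfold sumsq, sumf in *; cbn [fold_right]; [lra|].
  pose proof (pow2_ge_0 (isum x P)). lra.
Qed.

Definition packing (l : list (nat -> Prop)) : Prop :=
  (forall P, In P l -> is_interval P) /\ ForallOrdPairs disjoint l.

Lemma packing_app l1 l2 : packing l1 -> packing l2 ->
  (forall A B, In A l1 -> In B l2 -> disjoint A B) -> packing (l1 ++ l2).
Proof.
  intros [Hi1 Hd1] [Hi2 Hd2] H12. split.
  - intros P HP. apply in_app_or in HP as [HP|HP]; auto.
  - clear Hi1 Hi2. induction Hd1 as [|A l1 HA Hd1 IH]; simpl; auto.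
    constructor.
    + apply Forall_app. split; [exact HA|].
      apply Forall_forall. intros B HB. apply H12; simpl; auto.
    + apply IH. intros; apply H12; simpl; auto.
Qed.

Lemma packing_pair A B : is_interval A -> is_interval B -> disjoint A B -> packing (A :: B :: nil).
Proof.
  intros HA HB HAB. split.
  - intros P [<-|[<-|[]]]; assumption.
  - repeat constructor. exact HAB.
Qed.

Lemma packing_singleton A : is_interval A -> packing (A :: nil).
Proof. intros HA. split; [intros P [<-|[]]; exact HA|repeat constructor]. Qed.

Lemma interval_singleton p : (1 <= p)%nat -> is_interval (fun k => k = p).
Proof. intros Hp. split; [exists p; reflexivity|split; intros; lia]. Qed.

Lemma sumsq_le_normJ x l : inJ x -> packing l -> sumsq x l <= real (normJ x) ^ 2.
Proof.
  intros HJ [Hint Hdisj].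
  assert (Hsqrt : Rbar_le (sqrt (sumsq x l)) (normJ x)).
  { apply (proj1 (Lub_Rbar_correct _)). exists l.
    split; [exact Hint|split; [exact Hdisj|reflexivity]]. }
  rewrite <- HJ in Hsqrt. simpl in Hsqrt.
  pose proof (sqrt_sqrt _ (sumsq_nonneg x l)). pose proof (sqrt_pos (sumsq x l)). nra.
Qed.

Lemma packing_of_far_intervals x eps : 0 <= eps ->
  (forall N, exists Q, is_interval Q /\ (exists M, forall k, Q k -> (N <= k <= M)%nat) /\
     eps <= Rabs (isum x Q)) ->
  forall K N, exists l, packing l /\ (forall P, In P l -> forall k, P k -> (N <= k)%nat) /\
    INR K * eps ^ 2 <= sumsq x l.
Proof.
  intros Heps Hfar. induction K as [|K IH]; intros N.
  - exists nil. split; [split; [intros P []|constructor]|].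
    split; [intros P []|]. unfold sumsq, sumf; simpl; lra.
  - destruct (Hfar N) as [Q [HQ [[M HM] HQeps]]].
    destruct (IH (S (Nat.max N M))) as [l [Hl [Hl_far Hl_sum]]].
    exists (Q :: l). split; [|split].
    + apply (packing_app (Q :: nil) l); [apply packing_singleton, HQ|exact Hl|].
      intros A B [<-|[]] HB k [HA HBk]. apply HM in HA. apply (Hl_far B HB) in HBk. lia.
    + intros A [<-|HA] k Hk; [apply HM in Hk; lia|]. apply (Hl_far A HA) in Hk. lia.
    + rewrite S_INR. change (sumsq x (Q :: l)) with (isum x Q ^ 2 + sumsq x l).
      assert (eps ^ 2 <= isum x Q ^ 2) by (rewrite <- (pow2_abs (isum x Q)); apply pow_incr; lra).
      lra.
Qed.

Lemma ex_series_interval x P : inJ x -> is_interval P -> ex_series (ind x P).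
Proof.
  (* Blocks violating the Cauchy criterion form packings with unbounded sums of squares. *)
  intros HJ [_ [HP1 HPc]]. apply (ex_series_Cauchy (V := R_CompleteNormedModule)).
  apply NNPP. intros Hnc.
  apply not_all_ex_not in Hnc as [eps Hnc].
  assert (Hfar : forall N, exists Q, is_interval Q /\
            (exists M, forall k, Q k -> (N <= k <= M)%nat) /\ eps <= Rabs (isum x Q)).
  { intros N. apply NNPP. intros Hno. apply Hnc. exists (S N). intros n m Hn Hm.
    apply Rnot_le_lt. intros Hle. destruct n as [|n]; [lia|].
    destruct (Nat.lt_ge_cases m (S n)) as [Hmn|Hnm].
    - rewrite sum_n_m_zero, norm_zero in Hle by exact Hmn. pose proof (cond_pos eps). lra.
    - rewrite sum_n_m_ind in Hle by lia. apply Hno.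
      exists (fun k => P k /\ (S n <= k <= m)%nat).
      split; [|split; [exists m; intros k Hk; lia|exact Hle]].
      split; [|split].
      + apply NNPP. intros Hempty.
        rewrite isum_empty in Hle by (intros k Hk; apply Hempty; exists k; exact Hk).
        change (eps <= Rabs 0) in Hle. rewrite Rabs_R0 in Hle. pose proof (cond_pos eps). lra.
      + intros k [Hk _]. apply HP1, Hk.
      + intros p q s [Hp Hp'] [Hs Hs'] Hpq Hqs. split; [apply (HPc p q s)|]; auto; lia. }
  destruct (INR_archimed (eps ^ 2) (real (normJ x) ^ 2)) as [K HK].
  { pose proof (cond_pos eps). apply pow_lt; lra. }
  destruct (packing_of_far_intervals x eps (Rlt_le _ _ (cond_pos eps)) Hfar K 0)
    as [l [Hl [_ Hsum]]].
  pose proof (sumsq_le_normJ x l HJ Hl). lra.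
Qed.

Lemma isum_union x A B C : inJ x -> is_interval A -> is_interval B -> disjoint A B ->
  (forall k, C k <-> A k \/ B k) -> isum x C = isum x A + isum x B.
Proof. intros HJ HA HB. apply isum_union_ex; apply ex_series_interval; assumption. Qed.

Lemma inF_ge1 F m : inF F m = true -> (1 <= m)%nat.
Proof. unfold inF. intros H. apply andb_prop in H as [H _]. apply Nat.leb_le, H. Qed.

Lemma inF_between F p q s : inF F p = true -> inF F s = true -> (p <= q <= s)%nat ->
  inF F q = true.
Proof.
  unfold inF. intros Hp Hs Hq.
  apply andb_prop in Hp as [Hp _]. apply andb_prop in Hs as [_ Hs]. apply Nat.leb_le in Hp.
  apply andb_true_intro. split; [apply Nat.leb_le; lia|].
  destruct F; [apply Nat.leb_le in Hs; apply Nat.leb_le; lia|reflexivity].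
Qed.

Lemma family_lt I F m m' p q : is_family I F -> inF F m = true -> inF F m' = true ->
  (m < m')%nat -> I m p -> I m' q -> (p < q)%nat.
Proof.
  intros [_ [Hint Hord]] Hm Hm' Hlt. revert q. induction Hlt as [|n Hlt IH]; intros q Hp Hq.
  - exact (Hord m Hm Hm' p q Hp Hq).
  - assert (Hn : inF F n = true) by (apply (inF_between F m n (S n)); auto; lia).
    destruct (Hint n Hn) as [[e He] _].
    pose proof (IH Hn e Hp He). pose proof (Hord n Hn Hm' e q He Hq). lia.
Qed.

Lemma family_disjoint I F m m' : is_family I F -> inF F m = true -> inF F m' = true ->
  m <> m' -> disjoint (I m) (I m').
Proof.
  intros HF Hm Hm' Hne t [Ht Ht']. destruct (Nat.lt_gt_cases m m') as [[Hlt|Hlt] _]; [exact Hne|..].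
  - pose proof (family_lt I F m m' t t HF Hm Hm' Hlt Ht Ht'). lia.
  - pose proof (family_lt I F m' m t t HF Hm' Hm Hlt Ht' Ht). lia.
Qed.

Lemma family_member_ge1 I F m t : is_family I F -> inF F m = true -> I m t -> (1 <= t)%nat.
Proof. intros HF Hm Ht. exact (proj1 (proj2 (proj1 (proj2 HF) m Hm)) t Ht). Qed.

Lemma family_member_convex I F m p q t : is_family I F -> inF F m = true ->
  I m p -> I m q -> (p <= t <= q)%nat -> I m t.
Proof. intros HF Hm Hp Hq Ht. apply (proj2 (proj2 (proj1 (proj2 HF) m Hm)) p t q); auto; lia. Qed.

Lemma packing_members I F s : is_family I F -> NoDup s ->
  (forall m, In m s -> inF F m = true) -> packing (map I s).
Proof.
  intros HF Hs HsF. split.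
  - intros P HP. apply in_map_iff in HP as [m [<- Hm]]. apply (proj1 (proj2 HF)), HsF, Hm.
  - induction Hs as [|m s Hm Hs IH]; simpl; constructor.
    + apply Forall_forall. intros P HP. apply in_map_iff in HP as [m' [<- Hm']].
      apply (family_disjoint I F); [exact HF|apply HsF; left; reflexivity|..].
      * apply HsF. right. exact Hm'.
      * intros ->. contradiction.
    + apply IH. intros m' Hm'. apply HsF. right. exact Hm'.
Qed.

Lemma sum_f_R0_nonneg_mono (f : nat -> R) n m : (forall k, 0 <= f k) -> (n <= m)%nat ->
  sum_f_R0 f n <= sum_f_R0 f m.
Proof. intros Hf Hnm. induction Hnm as [|m Hnm IH]; simpl; [lra|]. specialize (Hf (S m)). lra. Qed.

Lemma Lim_seq_sqrt_bound (T : nat -> R) N d : (forall n, 0 <= T n) ->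
  Lim_seq (fun n => sqrt (T n)) = Finite N -> (forall n, T n + d <= N ^ 2) -> d <= 0.
Proof.
  intros HT HN Hb. apply Rnot_lt_le. intros Hd.
  assert (HN0 : Rbar_le (Lim_seq (fun _ => 0)) (Lim_seq (fun n => sqrt (T n)))).
  { apply Lim_seq_le_loc. exists 0%nat. intros n _. apply sqrt_pos. }
  assert (Hle : Rbar_le (Lim_seq (fun n => sqrt (T n))) (Lim_seq (fun _ => sqrt (N ^ 2 - d)))).
  { apply Lim_seq_le_loc. exists 0%nat. intros n _. apply sqrt_le_1_alt. specialize (Hb n). lra. }
  rewrite HN, Lim_seq_const in HN0, Hle.
  change (0 <= N) in HN0. change (N <= sqrt (N ^ 2 - d)) in Hle.
  assert (Hpos : 0 <= N ^ 2 - d) by (specialize (Hb 0%nat); specialize (HT 0%nat); lra).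
  pose proof (sqrt_sqrt _ Hpos).
  assert (N * N <= sqrt (N ^ 2 - d) * sqrt (N ^ 2 - d)) by (apply Rmult_le_compat; lra).
  simpl in *. lra.
Qed.

Section NormingFamily.

Variables (x : nat -> R) (I : nat -> nat -> Prop) (F : option nat).
Hypotheses (HJ : inJ x) (HI : x_norming x I F).

Lemma norming_subfamily_max s l :
  NoDup s -> (forall m, In m s -> inF F m = true) -> packing l ->
  (forall P, In P l -> forall m, inF F m = true -> ~ In m s -> disjoint P (I m)) ->
  sumsq x l <= sumsq x (map I s).
Proof.
  intros Hs HsF Hl Hl_out. destruct HI as [Hfam Hnorm].
  set (T := fun n => sum_f_R0 (fun m => if inF F m then Rabs (isum x (I m)) ^ 2 else 0) n).
  set (out := fun m => andb (inF F m) (negb (memb m s))).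
  assert (Hsplit : forall n, (list_max s <= n)%nat ->
            T n = sumsq x (map I (filter out (seq 0 (S n)))) + sumsq x (map I s)).
  { intros n Hn. unfold T, sumsq. rewrite (sum_f_R0_indicator_split (inF F) _ s n Hs HsF Hn).
    rewrite !sumf_map. f_equal; apply sumf_ext; intros m _; apply pow2_abs. }
  assert (Hpack : forall n, packing (map I (filter out (seq 0 (S n))) ++ l)).
  { intros n. apply packing_app; [|exact Hl|].
    - apply (packing_members I F); [exact Hfam|apply NoDup_filter, seq_NoDup|].
      intros m Hm. apply filter_In in Hm as [_ Hm]. apply andb_prop in Hm as [Hm _]. exact Hm.
    - intros A B HA HB. apply in_map_iff in HA as [m [<- Hm]].
      apply filter_In in Hm as [_ Hm]. apply andb_prop in Hm as [HmF Hm].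
      intros k [HkA HkB]. apply (Hl_out B HB m HmF) with k; [|split; assumption].
      intros Hin. apply memb_In in Hin. rewrite Hin in Hm. discriminate. }
  assert (HT0 : forall k, 0 <= (if inF F k then Rabs (isum x (I k)) ^ 2 else 0)).
  { intros k. destruct (inF F k); [apply pow2_ge_0|lra]. }
  assert (Hbound : forall n, T n + (sumsq x l - sumsq x (map I s)) <= real (normJ x) ^ 2).
  { intros n. set (n' := Nat.max n (list_max s)).
    pose proof (sumsq_le_normJ x _ HJ (Hpack n')) as H. rewrite sumsq_app in H.
    assert (T n <= T n') by (apply sum_f_R0_nonneg_mono; [exact HT0|lia]).
    rewrite (Hsplit n') in * by lia. lra. }
  apply (Lim_seq_sqrt_bound T (real (normJ x))) in Hbound; [lra| |].
  - intros n. apply cond_pos_sum, HT0.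
  - change (fam_norm x I F = real (normJ x)). rewrite Hnorm. symmetry. exact HJ.
Qed.

Lemma norming_member_max k l : inF F k = true -> packing l ->
  (forall P, In P l -> forall t, P t -> I k t) -> sumsq x l <= isum x (I k) ^ 2.
Proof.
  intros Hk Hl Hin.
  replace (isum x (I k) ^ 2) with (sumsq x (map I (k :: nil))) by (unfold sumsq, sumf; simpl; ring).
  apply norming_subfamily_max; [repeat constructor; intros []|intros m [<-|[]]; exact Hk|exact Hl|].
  intros P HP m Hm Hmk t [HPt HIt].
  apply (family_disjoint I F k m (proj1 HI) Hk Hm) with t;
    [|split; [exact (Hin P HP t HPt)|exact HIt]].
  intros ->. apply Hmk. left. reflexivity.
Qed.

Lemma norming_member_pair k A B : inF F k = true -> is_interval A -> is_interval B ->
  disjoint A B -> (forall t, A t -> I k t) -> (forall t, B t -> I k t) ->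
  isum x A ^ 2 + isum x B ^ 2 <= isum x (I k) ^ 2.
Proof.
  intros Hk HA HB HAB HAk HBk.
  replace (isum x A ^ 2 + isum x B ^ 2) with (sumsq x (A :: B :: nil))
    by (unfold sumsq, sumf; simpl; ring).
  apply norming_member_max; [exact Hk|apply packing_pair; assumption|].
  intros P [<-|[<-|[]]]; assumption.
Qed.

Lemma norming_member_split_mul_nonneg k A B : inF F k = true -> is_interval A -> is_interval B ->
  disjoint A B -> (forall t, A t -> I k t) -> (forall t, B t -> I k t) ->
  isum x (I k) = isum x A + isum x B -> 0 <= isum x A * isum x B.
Proof.
  intros Hk HA HB HAB HAk HBk Hsum.
  pose proof (norming_member_pair k A B Hk HA HB HAB HAk HBk) as H. rewrite Hsum in H. nra.
Qed.

Lemma norming_member_sum_ne k p B : inF F k = true -> I k p -> x p <> 0 ->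
  is_interval B -> ~ B p -> (forall t, B t -> I k t) -> isum x B <> isum x (I k).
Proof.
  intros Hk Hp Hxp HB HBp HBk Heq.
  assert (Hp1 : (1 <= p)%nat) by exact (family_member_ge1 I F k p (proj1 HI) Hk Hp).
  pose proof (norming_member_pair k (fun t => t = p) B Hk (interval_singleton p Hp1) HB) as H.
  rewrite isum_singleton, Heq in H.
  assert (x p ^ 2 + isum x (I k) ^ 2 <= isum x (I k) ^ 2)
    by (apply H; [intros t [-> HBt]; contradiction|intros t ->; exact Hp|exact HBk]).
  apply Hxp. nra.
Qed.

Lemma norming_cover t : supp x t -> exists m, inF F m = true /\ I m t.
Proof.
  intros [Ht1 Hxt]. apply NNPP. intros Hno.
  assert (H : sumsq x ((fun k => k = t) :: nil) <= sumsq x (map I nil)).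
  { apply norming_subfamily_max;
      [constructor|intros m []|apply packing_singleton, interval_singleton, Ht1|].
    intros P [<-|[]] m Hm _ k [-> Hmk]. apply Hno. exists m. split; assumption. }
  unfold sumsq, sumf in H. simpl in H. rewrite isum_singleton in H. apply Hxt. nra.
Qed.

End NormingFamily.

Lemma partition_min_supp x I F k : x_norming_partition x I F -> inF F k = true ->
  exists m, is_min (I k) m /\ supp x m.
Proof.
  intros [_ [Hinner Hlast]] Hk. destruct F as [n|]; [|exact (proj1 (Hinner k Hk Logic.I))].
  destruct (Nat.lt_ge_cases k n) as [Hkn|Hkn]; [exact (proj1 (Hinner k Hk Hkn))|].
  replace k with n by (apply andb_prop in Hk as [_ Hk]; apply Nat.leb_le in Hk; lia).
  exact (proj1 Hlast).
Qed.

Lemma partition_supp_after x I F k t : x_norming_partition x I F -> inF F k = true -> I k t ->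
  exists r, I k r /\ (t <= r)%nat /\ supp x r.
Proof.
  intros [[[_ [Hint _]] _] [Hinner Hlast]] Hk Ht.
  assert (Hmax : (exists m, is_max (I k) m /\ supp x m) ->
                 exists r, I k r /\ (t <= r)%nat /\ supp x r).
  { intros [m [[Hm Hm_max] Hxm]]. exists m. auto. }
  destruct F as [n|]; [|exact (Hmax (proj2 (Hinner k Hk Logic.I)))].
  destruct (Nat.lt_ge_cases k n) as [Hkn|Hkn]; [exact (Hmax (proj2 (Hinner k Hk Hkn)))|].
  assert (k = n) by (apply andb_prop in Hk as [_ Hk]; apply Nat.leb_le in Hk; lia). subst k.
  destruct Hlast as [_ [[b|] [HIb Hsb]]].
  - exists b. destruct HIb as [HIb HIb_max], Hsb as [Hsb _]. auto.
  - destruct (Hsb t) as [m [Hm Htm]]. destruct (HIb m) as [m' [Hm' Hmm']].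
    exists m. split; [apply (proj2 (proj2 (Hint n Hk)) t m m'); auto; lia|split; [lia|exact Hm]].
Qed.

Lemma Rmult_sign_absurd w u v : w <> 0 -> u <> 0 -> v <> 0 ->
  0 <= w * u -> 0 <= u * v -> w * v <= 0 -> False.
Proof.
  intros Hw Hu Hv Hwu Huv Hwv.
  pose proof (Rmult_integral_contrapositive_currified w u Hw Hu).
  pose proof (Rmult_integral_contrapositive_currified u v Hu Hv).
  assert (Hprod : 0 < (w * u) * (u * v)) by (apply Rmult_lt_0_compat; lra).
  replace ((w * u) * (u * v)) with ((w * v) * (u * u)) in Hprod by ring.
  pose proof (Rle_0_sqr u). unfold Rsqr in *. nra.
Qed.

Section Crossing.

Variables (x : nat -> R) (I : nat -> nat -> Prop) (F : option nat)
  (L : nat -> nat -> Prop) (G : option nat) (i i' j a c r : nat).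
Hypotheses (HJ : inJ x) (HI : x_norming x I F) (HL : x_norming x L G)
  (Hi : inF F i = true) (Hi' : inF F i' = true) (Hj : inF G j = true) (Hii' : (i < i')%nat)
  (Ha_I : is_min (I i) a) (Ha_L : is_min (L j) a) (Hc_I : is_min (I i') c) (Hc_L : L j c)
  (Hr_I : I i' r) (Hr_L : ~ L j r) (Hxa : x a <> 0) (Hxc : x c <> 0) (Hxr : x r <> 0).

(* Y replaces the members I_i, ..., I_{i'}. *)
Let W := fun t => (a <= t < c)%nat.
Let U := fun t => (c <= t)%nat /\ L j t.
Let V := fun t => I i' t /\ ~ L j t.
Let Y := fun t => (a <= t)%nat /\ ((t < c)%nat \/ I i' t).

Let L_convex p q t : L j p -> L j q -> (p <= t <= q)%nat -> L j t :=
  family_member_convex L G j p q t (proj1 HL) Hj.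
Let I'_convex p q t : I i' p -> I i' q -> (p <= t <= q)%nat -> I i' t :=
  family_member_convex I F i' p q t (proj1 HI) Hi'.

Lemma a_lt_c : (a < c)%nat.
Proof. exact (family_lt I F i i' a c (proj1 HI) Hi Hi' Hii' (proj1 Ha_I) (proj1 Hc_I)). Qed.

Lemma L_lt_r t : L j t -> (t < r)%nat.
Proof.
  intros Ht. apply Nat.nlt_ge. intros Hrt. apply Hr_L, (L_convex a t); [apply Ha_L|exact Ht|].
  pose proof a_lt_c. pose proof (proj2 Hc_I r Hr_I). lia.
Qed.

Lemma L_split t : L j t <-> W t \/ U t.
Proof.
  unfold W, U. split.
  - intros Ht. pose proof (proj2 Ha_L t Ht).
    destruct (Nat.lt_ge_cases t c); [left; lia|right; auto].
  - intros [Ht|[_ Ht]]; [apply (L_convex a c); [apply Ha_L|exact Hc_L|lia]|exact Ht].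
Qed.

Lemma I'_split t : I i' t <-> U t \/ V t.
Proof.
  unfold U, V. split.
  - intros Ht. pose proof (proj2 Hc_I t Ht). destruct (classic (L j t)); [left|right]; auto.
  - intros [[Hct Ht]|[Ht _]]; [apply (I'_convex c r); [apply Hc_I|exact Hr_I|]|exact Ht].
    pose proof (L_lt_r t Ht). lia.
Qed.

Lemma a_ge1 : (1 <= a)%nat.
Proof. exact (family_member_ge1 L G j a (proj1 HL) Hj (proj1 Ha_L)). Qed.

Lemma W_interval : is_interval W.
Proof.
  pose proof a_lt_c. pose proof a_ge1. unfold W. split; [exists a; lia|split; intros; lia].
Qed.

Lemma U_interval : is_interval U.
Proof.
  unfold U. split; [exists c; split; [lia|exact Hc_L]|split].
  - intros t [_ Ht]. exact (family_member_ge1 L G j t (proj1 HL) Hj Ht).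
  - intros p q s [Hp HLp] [_ HLs] Hpq Hqs. split; [lia|apply (L_convex p s); auto].
Qed.

Lemma V_interval : is_interval V.
Proof.
  unfold V. split; [exists r; split; assumption|split].
  - intros t [Ht _]. exact (family_member_ge1 I F i' t (proj1 HI) Hi' Ht).
  - intros p q s [Hp HLp] [Hs _] Hpq Hqs. split; [apply (I'_convex p s); auto|].
    intros HLq. apply HLp, (L_convex a q); [apply Ha_L|exact HLq|].
    pose proof a_lt_c. pose proof (proj2 Hc_I p Hp). lia.
Qed.

Lemma Y_interval : is_interval Y.
Proof.
  pose proof a_lt_c. pose proof a_ge1. unfold Y.
  split; [exists a; lia|split]; [intros; lia|].
  intros p q s [Hp _] [Hs Hs'] Hpq Hqs. split; [lia|].
  destruct (Nat.lt_ge_cases q c) as [Hqc|Hqc]; [left; exact Hqc|right].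
  destruct Hs' as [Hs'|Hs']; [lia|]. apply (I'_convex c s); [apply Hc_I|exact Hs'|lia].
Qed.

Lemma isum_L_split : isum x (L j) = isum x W + isum x U.
Proof.
  apply isum_union; [exact HJ|exact W_interval|exact U_interval| |exact L_split].
  unfold W, U. intros t [Ht [Ht' _]]. lia.
Qed.

Lemma isum_I'_split : isum x (I i') = isum x U + isum x V.
Proof.
  apply isum_union; [exact HJ|exact U_interval|exact V_interval| |exact I'_split].
  unfold U, V. intros t [[_ Ht] [_ Ht']]. contradiction.
Qed.

Lemma isum_Y_split : isum x Y = isum x W + isum x (I i').
Proof.
  apply isum_union; [exact HJ|exact W_interval|exact (proj1 (proj2 (proj1 HI)) i' Hi')| |].
  - unfold W. intros t [Ht Ht']. pose proof (proj2 Hc_I t Ht'). lia.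
  - unfold Y, W. intros t. split.
    + intros [Hat [Htc|Ht]]; [left; lia|right; exact Ht].
    + pose proof a_lt_c. intros [Ht|Ht]; [split; [lia|left; lia]|].
      pose proof (proj2 Hc_I t Ht). split; [lia|right; exact Ht].
Qed.

Lemma W_U_disjoint : disjoint W U.
Proof. unfold W, U. intros t [Ht [Ht' _]]. lia. Qed.

Lemma U_V_disjoint : disjoint U V.
Proof. unfold U, V. intros t [[_ Ht] [_ Ht']]. contradiction. Qed.

Lemma isum_W_neq0 : isum x W <> 0.
Proof.
  intros Hw. apply (norming_member_sum_ne x L G HJ HL j a U Hj (proj1 Ha_L) Hxa U_interval).
  - unfold U. intros [Hca _]. pose proof a_lt_c. lia.
  - intros t Ht. apply L_split. right. exact Ht.
  - rewrite isum_L_split, Hw. ring.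
Qed.

Lemma isum_U_neq0 : isum x U <> 0.
Proof.
  intros Hu. apply (norming_member_sum_ne x I F HJ HI i' c V Hi' (proj1 Hc_I) Hxc V_interval).
  - unfold V. intros [_ H]. exact (H Hc_L).
  - intros t Ht. apply I'_split. right. exact Ht.
  - rewrite isum_I'_split, Hu. ring.
Qed.

Lemma isum_V_neq0 : isum x V <> 0.
Proof.
  intros Hv. apply (norming_member_sum_ne x I F HJ HI i' r U Hi' Hr_I Hxr U_interval).
  - unfold U. intros [_ H]. exact (Hr_L H).
  - intros t Ht. apply I'_split. left. exact Ht.
  - rewrite isum_I'_split, Hv. ring.
Qed.

Lemma isum_WU_nonneg : 0 <= isum x W * isum x U.
Proof.
  apply (norming_member_split_mul_nonneg x L G HJ HL j); try assumption;
    [exact W_interval|exact U_interval|exact W_U_disjoint| | |exact isum_L_split];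
    intros t Ht; apply L_split; auto.
Qed.

Lemma isum_UV_nonneg : 0 <= isum x U * isum x V.
Proof.
  apply (norming_member_split_mul_nonneg x I F HJ HI i'); try assumption;
    [exact U_interval|exact V_interval|exact U_V_disjoint| | |exact isum_I'_split];
    intros t Ht; apply I'_split; auto.
Qed.

Lemma block_members_in_W m : (i <= m < i')%nat -> inF F m = true /\ forall t, I m t -> W t.
Proof.
  intros Hm. assert (HmF : inF F m = true) by (apply (inF_between F i m i'); auto; lia).
  split; [exact HmF|]. intros t Ht. unfold W. split.
  - destruct (Nat.eq_dec i m) as [<-|Him]; [exact (proj2 Ha_I t Ht)|].
    pose proof (family_lt I F i m a t (proj1 HI) Hi HmF ltac:(lia) (proj1 Ha_I) Ht). lia.
  - exact (family_lt I F m i' t c (proj1 HI) HmF Hi' ltac:(lia) Ht (proj1 Hc_I)).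
Qed.

Let block := map I (seq i (i' - i)).

Lemma merge_lower_bound : sumsq x block + isum x U ^ 2 <= isum x (L j) ^ 2.
Proof.
  replace (sumsq x block + isum x U ^ 2) with (sumsq x (block ++ U :: nil))
    by (rewrite sumsq_app; change (sumsq x (U :: nil)) with (isum x U ^ 2 + 0); ring).
  apply (norming_member_max x L G HJ HL j); [exact Hj| |].
  - apply packing_app; [apply (packing_members I F _ (proj1 HI)); [apply seq_NoDup|]|
                        apply packing_singleton, U_interval|].
    + intros m Hm. apply in_seq in Hm. apply (block_members_in_W m). lia.
    + intros A B HA [<-|[]] t [HAt HUt]. apply in_map_iff in HA as [m [<- Hm]]. apply in_seq in Hm.
      apply (proj2 (block_members_in_W m ltac:(lia))) in HAt. exact (W_U_disjoint t (conj HAt HUt)).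
  - intros P HP t Ht. apply L_split. apply in_app_or in HP as [HP|[<-|[]]]; [left|right; exact Ht].
    apply in_map_iff in HP as [m [<- Hm]]. apply in_seq in Hm.
    apply (block_members_in_W m); [lia|exact Ht].
Qed.

Lemma merge_upper_bound : isum x Y ^ 2 <= sumsq x block + isum x (I i') ^ 2.
Proof.
  assert (Hblock : sumsq x (map I (seq i (S i' - i))) = sumsq x block + isum x (I i') ^ 2).
  { replace (S i' - i)%nat with (S (i' - i)) by lia. rewrite seq_S, map_app, sumsq_app.
    replace (i + (i' - i))%nat with i' by lia.
    change (sumsq x (map I (i' :: nil))) with (isum x (I i') ^ 2 + 0). unfold block. ring. }
  rewrite <- Hblock. replace (isum x Y ^ 2) with (sumsq x (Y :: nil))
    by (change (sumsq x (Y :: nil)) with (isum x Y ^ 2 + 0); ring).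
  apply (norming_subfamily_max x I F HJ HI);
    [apply seq_NoDup| |apply packing_singleton, Y_interval|].
  - intros m Hm. apply in_seq in Hm. apply (inF_between F i m i'); auto; lia.
  - intros P [<-|[]] m Hm Hnot t [[Hat Ht] Hmt]. rewrite in_seq in Hnot.
    destruct (Nat.lt_ge_cases m i) as [Hmi|Hmi].
    + pose proof (family_lt I F m i t a (proj1 HI) Hm Hi Hmi Hmt (proj1 Ha_I)). lia.
    + pose proof (family_lt I F i' m c t (proj1 HI) Hi' Hm ltac:(lia) (proj1 Hc_I) Hmt).
      destruct Ht as [Ht|Ht]; [lia|].
      apply (family_disjoint I F i' m (proj1 HI) Hi' Hm ltac:(lia) t). split; assumption.
Qed.

Lemma isum_WV_nonpos : isum x W * isum x V <= 0.
Proof.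
  pose proof merge_lower_bound as Hlow. pose proof merge_upper_bound as Hup.
  rewrite isum_L_split in Hlow. rewrite isum_Y_split, isum_I'_split in Hup. nra.
Qed.

Lemma crossing_absurd : False.
Proof.
  exact (Rmult_sign_absurd _ _ _ isum_W_neq0 isum_U_neq0 isum_V_neq0
           isum_WU_nonneg isum_UV_nonneg isum_WV_nonpos).
Qed.

End Crossing.

Lemma norming_partition_no_crossing x I F L G i j i' a :
  inJ x -> x_norming_partition x I F -> x_norming_partition x L G ->
  inF F i = true -> inF G j = true -> inF F i' = true -> i' <> i ->
  is_min (I i) a -> is_min (L j) a ->
  forall k k', I i' k -> L j k -> I i' k' -> ~ L j k' -> False.
Proof.
  intros HJ HPI HPL Hi Hj Hi' Hne Ha_I Ha_L k k' Hk_I Hk_L Hk'_I Hk'_L.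
  pose proof (proj1 (proj1 HPI)) as HFI. pose proof (proj1 (proj1 HPL)) as HFL.
  assert (Hii' : (i < i')%nat).
  { destruct (Nat.lt_gt_cases i i') as [[Hlt|Hgt] _]; [congruence|exact Hlt|].
    pose proof (family_lt I F i' i k a HFI Hi' Hi Hgt Hk_I (proj1 Ha_I)).
    pose proof (proj2 Ha_L k Hk_L). lia. }
  destruct (partition_min_supp x I F i' HPI Hi') as [c [Hc_I [_ Hxc]]].
  pose proof (family_lt I F i i' a c HFI Hi Hi' Hii' (proj1 Ha_I) (proj1 Hc_I)) as Hac.
  assert (Hc_L : L j c).
  { apply (family_member_convex L G j a k c HFL Hj (proj1 Ha_L) Hk_L).
    pose proof (proj2 Hc_I k Hk_I). lia. }
  destruct (partition_supp_after x I F i' k' HPI Hi' Hk'_I) as [r [Hr_I [Hk'r [_ Hxr]]]].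
  assert (Hr_L : ~ L j r).
  { intros Hr_L. apply Hk'_L, (family_member_convex L G j a r k' HFL Hj (proj1 Ha_L) Hr_L).
    pose proof (proj2 Hc_I k' Hk'_I). lia. }
  assert (Hxa : x a <> 0).
  { destruct (partition_min_supp x I F i HPI Hi) as [m [[Hm Hm_min] [_ Hxm]]].
    replace a with m; [exact Hxm|].
    pose proof (Hm_min a (proj1 Ha_I)). pose proof (proj2 Ha_I m Hm). lia. }
  exact (crossing_absurd x I F L G i i' j a c r HJ (proj1 HPI) (proj1 HPL) Hi Hi' Hj Hii'
           Ha_I Ha_L Hc_I Hc_L Hr_I Hr_L Hxa Hxc Hxr).
Qed.

Lemma family_indices_inside_interval I F P i : is_family I F -> is_interval P ->
  inF F i = true -> (forall t, I i t -> P t) ->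
  (forall m k, inF F m = true -> I m k -> P k -> forall t, I m t -> P t) ->
  is_interval (fun m => inF F m = true /\ forall t, I m t -> P t).
Proof.
  intros HF HP Hi Hsub Hmeet. split; [exists i; split; assumption|split].
  - intros m [Hm _]. exact (inF_ge1 F m Hm).
  - intros p q s [Hp Hp_in] [Hs Hs_in] Hpq Hqs.
    assert (Hq : inF F q = true) by (apply (inF_between F p q s); auto).
    split; [exact Hq|].
    destruct (Nat.eq_dec p q) as [<-|Hpq']; [exact Hp_in|].
    destruct (Nat.eq_dec q s) as [->|Hqs']; [exact Hs_in|].
    destruct (proj1 (proj1 (proj2 HF) q Hq)) as [e He].
    destruct (proj1 (proj1 (proj2 HF) p Hp)) as [ep Hep].
    destruct (proj1 (proj1 (proj2 HF) s Hs)) as [es Hes].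
    pose proof (family_lt I F p q ep e HF Hp Hq ltac:(lia) Hep He).
    pose proof (family_lt I F q s e es HF Hq Hs ltac:(lia) He Hes).
    apply (Hmeet q e Hq He), (proj2 (proj2 HP) ep e es);
      [apply Hp_in, Hep|apply Hs_in, Hes|lia|lia].
Qed.

Theorem proposition3p7 (x : nat -> R)
  (I : nat -> nat -> Prop) (F : option nat)
  (L : nat -> nat -> Prop) (G : option nat) (i j : nat) :
  (exists n, supp x n) ->
  inJ x ->
  x_norming_partition x I F ->
  x_norming_partition x L G ->
  inF F i = true -> inF G j = true ->
  (forall k, I i k -> L j k) ->
  (exists m, is_min (I i) m /\ is_min (L j) m) ->
  (forall i', inF F i' = true -> i' <> i ->
     (forall k, I i' k -> L j k) \/ (forall k, ~ (I i' k /\ L j k))) /\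
  (exists Fj : nat -> Prop,
     is_interval Fj /\ (forall i', Fj i' -> inF F i' = true) /\
     (forall k, (L j k /\ supp x k) <->
                (exists i', Fj i' /\ I i' k /\ supp x k))).
Proof.
  intros _ HJ HPI HPL Hi Hj Hsub [a [Ha_I Ha_L]].
  assert (Hmeet : forall m k, inF F m = true -> I m k -> L j k -> forall t, I m t -> L j t).
  { intros m k Hm Hk_I Hk_L t Ht. destruct (Nat.eq_dec m i) as [->|Hmi]; [exact (Hsub t Ht)|].
    apply NNPP. intros Ht_L.
    exact (norming_partition_no_crossing x I F L G i j m a HJ HPI HPL Hi Hj Hm Hmi Ha_I Ha_L
             k t Hk_I Hk_L Ht Ht_L). }
  split.
  - intros i' Hi' _. destruct (classic (exists k, I i' k /\ L j k)) as [[k [Hk_I Hk_L]]|Hno].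
    + left. exact (Hmeet i' k Hi' Hk_I Hk_L).
    + right. intros k Hk. apply Hno. exists k. exact Hk.
  - exists (fun m => inF F m = true /\ forall t, I m t -> L j t). split; [|split].
    + apply (family_indices_inside_interval I F (L j) i (proj1 (proj1 HPI))); try assumption.
      exact (proj1 (proj2 (proj1 (proj1 HPL))) j Hj).
    + intros m [Hm _]. exact Hm.
    + intros k. split.
      * intros [Hk_L Hk]. destruct (norming_cover x I F HJ (proj1 HPI) k Hk) as [m [Hm Hk_I]].
        exists m. split; [split; [exact Hm|exact (Hmeet m k Hm Hk_I Hk_L)]|split; assumption].
      * intros [m [[_ Hm] [Hk_I Hk]]]. split; [exact (Hm k Hk_I)|exact Hk].
Qed.
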